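(* Let $C\in\mathscr{C}$ and let $z_C\colon C\to Z_C$ be obtained as follows: choose a distinguished triangle $V\to U\overset{a}{\to}C\to V[1]$ with $U\in\mathcal{U},V\in\mathcal{V}$; choose a distinguished triangle $T[-1]\to S[-1]\overset{b}{\to}U\to T$ with $S\in\mathcal{S},T\in\mathcal{T}$; and choose a distinguished triangle $S[-1]\overset{a\circ b}{\to}C\overset{z_C}{\to}Z_C\to S$. Then for every $Y\in\mathscr{C}^+$, the map \[ -\circ\underline{z}_C\colon\underline{\mathscr{C}}^+(Z_C,Y)\to\underline{\mathscr{C}}(C,Y) \] is bijective.
   Context: $\mathscr{C}$ is a triangulated category with shift $[1]$; subcategories are full, additive, closed under isomorphisms and direct summands. $\mathrm{Ext}^1(X,Y)=\mathscr{C}(X,Y[1])$. $\mathcal{M}\ast\mathcal{N}$ is the full subcategory of objects $C$ admitting a distinguished triangle $M\to C\to N\to M[1]$ with $M\in\mathcal{M}$, $N\in\mathcal{N}$. A cotorsion pair $(\mathcal{U},\mathcal{V})$: $\mathrm{Ext}^1(\mathcal{U},\mathcal{V})=0$ and $\mathscr{C}=\mathcal{U}\ast\mathcal{V}[1]$. Fix a twin cotorsion pair, i.e. cotorsion pairs $(\mathcal{S},\mathcal{T}),(\mathcal{U},\mathcal{V})$ with $\mathrm{Ext}^1(\mathcal{S},\mathcal{V})=0$. Put $\mathcal{W}=\mathcal{T}\cap\mathcal{U}$, $\mathscr{C}^+=\mathcal{W}\ast\mathcal{V}[1]$. $\underline{\mathscr{C}}$ and $\underline{\mathscr{C}}^+$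 denote the ideal quotients of $\mathscr{C}$ and $\mathscr{C}^+$ by morphisms factoring through objects of $\mathcal{W}$, and $\underline{f}$ is the image of a morphism $f$. (One has $Z_C\in\mathscr{C}^+$.) *)

From HB Require Import structures.
From mathcomp Require Import all_boot all_algebra.
Set Implicit Arguments. Unset Strict Implicit. Unset Printing Implicit Defensive.
Import GRing.Theory.
Local Open Scope ring_scope.

Record PreTri := {
  Obj : Type;
  CHom : Obj -> Obj -> zmodType;
  mcomp : forall X Y Z : Obj, CHom Y Z -> CHom X Y -> CHom X Z;
  idm : forall X : Obj, CHom X X;
  mcompA : forall X Y Z W (h : CHom Z W) (g : CHom Y Z) (f : CHom X Y),
    mcomp h (mcomp g f) = mcomp (mcomp h g) f;
  mcomp1m : forall X Y (f : CHom X Y), mcomp (idm Y) f = f;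
  mcompm1 : forall X Y (f : CHom X Y), mcomp f (idm X) = f;
  mcompDl : forall X Y Z (g1 g2 : CHom Y Z) (f : CHom X Y),
    mcomp (g1 + g2) f = mcomp g1 f + mcomp g2 f;
  mcompDr : forall X Y Z (g : CHom Y Z) (f1 f2 : CHom X Y),
    mcomp g (f1 + f2) = mcomp g f1 + mcomp g f2;
  zero_obj_ex : exists O : Obj, idm O = 0;
  biprod_ex : forall X Y : Obj, exists (B : Obj) (i1 : CHom X B) (i2 : CHom Y B)
    (p1 : CHom B X) (p2 : CHom B Y),
    [/\ mcomp p1 i1 = idm X, mcomp p2 i2 = idm Y, mcomp p1 i2 = 0,
        mcomp p2 i1 = 0 & mcomp i1 p1 + mcomp i2 p2 = idm B];
  sh : Obj -> Obj;
  shm : forall X Y : Obj, CHom X Y -> CHom (sh X) (sh Y);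
  shmD : forall X Y (f g : CHom X Y), shm (f + g) = shm f + shm g;
  shm1 : forall X, shm (idm X) = idm (sh X);
  shmM : forall X Y Z (g : CHom Y Z) (f : CHom X Y), shm (mcomp g f) = mcomp (shm g) (shm f);
  shm_inj : forall X Y (f g : CHom X Y), shm f = shm g -> f = g;
  shm_surj : forall X Y (g : CHom (sh X) (sh Y)), exists f : CHom X Y, shm f = g;
  sh_esurj : forall Y, exists X (f : CHom (sh X) Y) (g : CHom Y (sh X)),
    mcomp g f = idm (sh X) /\ mcomp f g = idm Y
}.

Arguments mcomp {p X Y Z}.
Arguments idm {p}.
Arguments sh {p}.
Arguments shm {p X Y}.

Section Basics.
Variable C : PreTri.

Definition is_iso (X Y : Obj C) (f : CHom X Y) :=
  exists g : CHom Y X, mcomp g f = idm X /\ mcomp f g = idm Y.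

Definition isoObj (X Y : Obj C) := exists f : CHom X Y, is_iso f.

Definition is_zero_obj (O : Obj C) := idm O = 0.

Record triangle := Tri {
  tX : Obj C; tY : Obj C; tZ : Obj C;
  tu : CHom tX tY; tv : CHom tY tZ; tw : CHom tZ (sh tX) }.

End Basics.

Arguments Tri {C tX tY tZ}.
Arguments tu {C}. Arguments tv {C}. Arguments tw {C}.
Arguments tX {C}. Arguments tY {C}. Arguments tZ {C}.

Record TriStr (C : PreTri) := {
  dist : triangle C -> Prop;
  dist_iso : forall (T T' : triangle C) (f1 : CHom (tX T') (tX T))
    (f2 : CHom (tY T') (tY T)) (f3 : CHom (tZ T') (tZ T)),
    is_iso f1 -> is_iso f2 -> is_iso f3 ->
    mcomp (tu T) f1 = mcomp f2 (tu T') ->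
    mcomp (tv T) f2 = mcomp f3 (tv T') ->
    mcomp (tw T) f3 = mcomp (shm f1) (tw T') ->
    dist T -> dist T';
  dist_id : forall (X O : Obj C), is_zero_obj O ->
    dist (Tri (idm X) (0 : CHom X O) (0 : CHom O (sh X)));
  dist_ex : forall (X Y : Obj C) (u : CHom X Y),
    exists Z (v : CHom Y Z) (w : CHom Z (sh X)), dist (Tri u v w);
  dist_rot : forall T : triangle C,
    dist T <-> dist (Tri (tv T) (tw T) (- shm (tu T)));
  dist_mor : forall (T T' : triangle C) (f : CHom (tX T) (tX T'))
    (g : CHom (tY T) (tY T')), dist T -> dist T' ->
    mcomp (tu T') f = mcomp g (tu T) ->
    exists h : CHom (tZ T) (tZ T'),
      mcomp (tv T') g = mcomp h (tv T) /\ mcomp (shm f) (tw T) = mcomp (tw T') h;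
  dist_oct : forall (X Y Z Q1 Q2 Q3 : Obj C) (f : CHom X Y) (g : CHom Y Z)
    (p1 : CHom Y Q1) (d1 : CHom Q1 (sh X)) (p2 : CHom Z Q2) (d2 : CHom Q2 (sh X))
    (p3 : CHom Z Q3) (d3 : CHom Q3 (sh Y)),
    dist (Tri f p1 d1) -> dist (Tri (mcomp g f) p2 d2) -> dist (Tri g p3 d3) ->
    exists (a : CHom Q1 Q2) (b : CHom Q2 Q3),
      [/\ dist (Tri a b (mcomp (shm p1) d3)), mcomp a p1 = mcomp p2 g,
          mcomp d2 a = d1, mcomp b p2 = p3 & mcomp d3 b = mcomp (shm f) d2]
}.

Section Subcats.
Variables (C : PreTri) (D : TriStr C).

Record subcat (P : Obj C -> Prop) : Prop := {
  subcat_iso : forall X Y, isoObj X Y -> P X -> P Y;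
  subcat_summand : forall X Y (i : CHom X Y) (p : CHom Y X),
    mcomp p i = idm X -> P Y -> P X;
  subcat_zero : forall O, is_zero_obj O -> P O;
  subcat_biprod : forall X Y B (i1 : CHom X B) (i2 : CHom Y B)
    (p1 : CHom B X) (p2 : CHom B Y),
    [/\ mcomp p1 i1 = idm X, mcomp p2 i2 = idm Y, mcomp p1 i2 = 0,
        mcomp p2 i1 = 0 & mcomp i1 p1 + mcomp i2 p2 = idm B] ->
    P X -> P Y -> P B
}.

Definition Ext1_zero (P Q : Obj C -> Prop) :=
  forall X Y, P X -> Q Y -> forall f : CHom X (sh Y), f = 0.

Definition shiftP (P : Obj C -> Prop) (X : Obj C) :=
  exists M, P M /\ isoObj X (sh M).

Definition star (M N : Obj C -> Prop) (X : Obj C) :=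
  exists (A B : Obj C) (f : CHom A X) (g : CHom X B) (h : CHom B (sh A)),
    [/\ M A, N B & dist D (Tri f g h)].

Definition cotorsion_pair (U V : Obj C -> Prop) :=
  Ext1_zero U V /\ forall X, star U (shiftP V) X.

Definition twin_cotorsion_pair (S T U V : Obj C -> Prop) :=
  [/\ cotorsion_pair S T, cotorsion_pair U V & Ext1_zero S V].

Definition Wcore (T U : Obj C -> Prop) (X : Obj C) := T X /\ U X.

Definition Cplus (T U V : Obj C -> Prop) := star (Wcore T U) (shiftP V).

Definition factors_through (W : Obj C -> Prop) (X Y : Obj C) (f : CHom X Y) :=
  exists (W0 : Obj C) (g : CHom X W0) (h : CHom W0 Y), W W0 /\ f = mcomp h g.

(* equality of images in the ideal quotient by W *)
Definition eqW (W : Obj C -> Prop) (X Y : Obj C) (f g : CHom X Y) :=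
  factors_through W (f - g).

End Subcats.

(* Write Y in W * V[1] via a triangle A -> Y -> M[1] with A in W and M in V.
   A map into Y from an object left orthogonal to V[1] (such as an object of S
   or of U) kills Y -> M[1], hence factors through A.  Since Hom(S[-1], T) = 0,
   every map from C into an object of W vanishes on a b.
   Surjectivity: h a factors through W, so h (a b) = 0 and h extends along z_C.
   Injectivity: if d z_C = beta alpha with alpha into W, then alpha extends
   along z_C to some alpha'; now d - beta alpha' vanishes on z_C, so it factors
   through Z_C -> S, and maps from S to Y factor through W. *)
From mathcomp Require Import all_boot all_algebra.
Set Implicit Arguments. Unset Strict Implicit. Unset Printing Implicit Defensive.
Import GRing.Theory.
Local Open Scope ring_scope.

Section Additive.
Variable C : PreTri.

Lemma mcomp0m (X Y Z : Obj C) (f : CHom X Y) : mcomp (0 : CHom Y Z) f = 0.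
Proof. by apply: (addrI (mcomp (0 : CHom Y Z) f)); rewrite -mcompDl !addr0. Qed.

Lemma mcompm0 (X Y Z : Obj C) (g : CHom Y Z) : mcomp g (0 : CHom X Y) = 0.
Proof. by apply: (addrI (mcomp g (0 : CHom X Y))); rewrite -mcompDr !addr0. Qed.

Lemma mcompNm (X Y Z : Obj C) (g : CHom Y Z) (f : CHom X Y) :
  mcomp (- g) f = - mcomp g f.
Proof. by apply: (addIr (mcomp g f)); rewrite -mcompDl !addNr mcomp0m. Qed.

Lemma mcompmN (X Y Z : Obj C) (g : CHom Y Z) (f : CHom X Y) :
  mcomp g (- f) = - mcomp g f.
Proof. by apply: (addIr (mcomp g f)); rewrite -mcompDr !addNr mcompm0. Qed.

Lemma mcompBl (X Y Z : Obj C) (g1 g2 : CHom Y Z) (f : CHom X Y) :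
  mcomp (g1 - g2) f = mcomp g1 f - mcomp g2 f.
Proof. by rewrite mcompDl mcompNm. Qed.

Lemma shm0 (X Y : Obj C) : shm (0 : CHom X Y) = 0.
Proof. by apply: (addrI (shm (0 : CHom X Y))); rewrite -shmD !addr0. Qed.

Lemma Ext1_zero_hom_unshift (P Q : Obj C -> Prop) (X Y : Obj C) :
  Ext1_zero P Q -> P (sh X) -> Q Y -> forall k : CHom X Y, k = 0.
Proof.
by move=> PQ PX QY k; apply: shm_inj; rewrite shm0 (PQ _ _ PX QY (shm k)).
Qed.

End Additive.

Section Triangles.
Variables (C : PreTri) (D : TriStr C).

Lemma dist_factor_coker (X Y Z W : Obj C) (u : CHom X Y) (v : CHom Y Z)
    (w : CHom Z (sh X)) (h : CHom Y W) :
  dist D (Tri u v w) -> mcomp h u = 0 -> exists k : CHom Z W, h = mcomp k v.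
Proof.
move=> uvw hu0; have [O O0] := zero_obj_ex C.
have O1 : is_zero_obj (sh O) by rewrite /is_zero_obj -shm1 O0 shm0.
have idW : dist D (Tri (0 : CHom O W) (idm W) (0 : CHom W (sh O))).
  by apply/(dist_rot D) => /=; rewrite shm0 oppr0; apply: dist_id.
have square : mcomp (0 : CHom O W) (0 : CHom X O) = mcomp h u.
  by rewrite mcomp0m hu0.
have [k [hk _]] := dist_mor uvw idW square.
by exists k; rewrite -hk /= mcomp1m.
Qed.

Lemma dist_factor_ker (X Y Z G : Obj C) (u : CHom X Y) (v : CHom Y Z)
    (w : CHom Z (sh X)) (g : CHom G Y) :
  dist D (Tri u v w) -> mcomp v g = 0 -> exists k : CHom G X, g = mcomp u k.
Proof.
move=> uvw vg0; have [O O0] := zero_obj_ex C.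
have idG := (dist_rot D (Tri (idm G) (0 : CHom G O) 0)).1 (dist_id D G O0).
have square : mcomp v g = mcomp (0 : CHom O Z) (0 : CHom G O).
  by rewrite mcomp0m vg0.
have [h [_]] := dist_mor idG ((dist_rot D _).1 uvw) square.
rewrite /= shm1 mcompmN mcompm1 mcompNm => /oppr_inj gh.
have [k hk] := shm_surj h.
by exists k; apply: shm_inj; rewrite shmM hk gh.
Qed.

End Triangles.

Section FactorsThrough.
Variables (C : PreTri) (W : Obj C -> Prop).
Hypothesis subW : subcat W.

Lemma factors_through0 (X Y : Obj C) : factors_through W (0 : CHom X Y).
Proof.
have [O O0] := zero_obj_ex C.
by exists O, 0, 0; split; [exact: subcat_zero | rewrite mcomp0m].
Qed.

Lemma factors_throughD (X Y : Obj C) (f g : CHom X Y) :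
  factors_through W f -> factors_through W g -> factors_through W (f + g).
Proof.
move=> [Wf [af [bf [Wf_W ->]]]] [Wg [ag [bg [Wg_W ->]]]].
have [B [i1 [i2 [p1 [p2 biB]]]]] := biprod_ex Wf Wg.
have [p1i1 p2i2 p1i2 p2i1 _] := biB.
exists B, (mcomp i1 af + mcomp i2 ag), (mcomp bf p1 + mcomp bg p2).
split; first exact: subcat_biprod biB Wf_W Wg_W.
rewrite !mcompDl !mcompDr -!mcompA ![mcomp p1 (mcomp _ _)]mcompA.
rewrite ![mcomp p2 (mcomp _ _)]mcompA p1i1 p2i2 p1i2 p2i1.
by rewrite !mcomp0m !mcompm0 !mcomp1m addr0 add0r.
Qed.

Lemma factors_throughMr (X Y Z : Obj C) (g : CHom Y Z) (f : CHom X Y) :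
  factors_through W g -> factors_through W (mcomp g f).
Proof.
by move=> [W0 [a [b [W0_W ->]]]]; exists W0, (mcomp a f), b; rewrite mcompA.
Qed.

End FactorsThrough.

Lemma subcat_Wcore (C : PreTri) (T U : Obj C -> Prop) :
  subcat T -> subcat U -> subcat (Wcore T U).
Proof.
move=> sT sU; split.
- move=> X Y XY [TX UX].
  by split; [exact: subcat_iso XY TX | exact: subcat_iso XY UX].
- move=> X Y i p pi [TY UY].
  by split; [exact: subcat_summand pi TY | exact: subcat_summand pi UY].
- by move=> O O0; split; exact: subcat_zero.
- move=> X Y B i1 i2 p1 p2 biB [TX UX] [TY UY].
  by split; [exact: subcat_biprod biB TX TY | exact: subcat_biprod biB UX UY].
Qed.

Section Cplus.
Variables (C : PreTri) (D : TriStr C) (T U V : Obj C -> Prop).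

Lemma Cplus_factors_through (P : Obj C -> Prop) (G Y : Obj C) (g : CHom G Y) :
  Ext1_zero P V -> P G -> Cplus D T U V Y -> factors_through (Wcore T U) g.
Proof.
move=> PV PG [A [B [f [p [d [W_A [M [V_M [phi [psi [psiphi _]]]]] fpd]]]]]].
have pg0 : mcomp p g = 0.
  rewrite -[mcomp p g]mcomp1m -psiphi -mcompA.
  by rewrite (PV _ _ PG V_M (mcomp phi _)) mcompm0.
have [k ->] := dist_factor_ker fpd pg0.
by exists A, k, f.
Qed.

Variable S : Obj C -> Prop.
Hypothesis ST : Ext1_zero S T.
Variables (X Y Z S1 : Obj C) (z : CHom X Z) (r : CHom Z (sh S1)).
Hypotheses (S_S1 : S (sh S1)) (Y_Cplus : Cplus D T U V Y).

Lemma factors_through_cancel_cone (c : CHom S1 X) (d : CHom Z Y) :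
  subcat T -> subcat U -> Ext1_zero S V -> dist D (Tri c z r) ->
  factors_through (Wcore T U) (mcomp d z) -> factors_through (Wcore T U) d.
Proof.
move=> sT sU SV czr [W1 [al [be [[T_W1 U_W1] dz]]]].
have alc0 : mcomp al c = 0 by exact: (Ext1_zero_hom_unshift ST S_S1 T_W1).
have [al' al'z] := dist_factor_coker czr alc0.
have dz0 : mcomp (d - mcomp be al') z = 0.
  by rewrite mcompBl dz -mcompA -al'z subrr.
have [ga gar] := dist_factor_coker ((dist_rot D _).1 czr) dz0.
have subW := subcat_Wcore sT sU.
rewrite -[d](subrK (mcomp be al')) gar.
apply: factors_throughD => //; last by exists W1, al', be.
exact/factors_throughMr/(Cplus_factors_through _ SV S_S1 Y_Cplus).
Qed.

Lemma hom_extends_along_cone (U0 : Obj C) (a : CHom U0 X) (b : CHom S1 U0)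
    (h : CHom X Y) :
  Ext1_zero U V -> U U0 -> dist D (Tri (mcomp a b) z r) ->
  exists f : CHom Z Y, h = mcomp f z.
Proof.
move=> UV U_U0 abzr.
have [W0 [k [l [[T_W0 _] hak]]]] :=
  Cplus_factors_through (mcomp h a) UV U_U0 Y_Cplus.
have hab0 : mcomp h (mcomp a b) = 0.
  rewrite mcompA hak -mcompA.
  by rewrite (Ext1_zero_hom_unshift ST S_S1 T_W0 (mcomp k b)) mcompm0.
exact: dist_factor_coker abzr hab0.
Qed.

End Cplus.

Theorem proposition3p6 (C : PreTri) (D : TriStr C)
  (S T U V : Obj C -> Prop)
  (hS : subcat S) (hT : subcat T) (hU : subcat U) (hV : subcat V)
  (htwin : twin_cotorsion_pair D S T U V)
  (X : Obj C)
  (V0 U0 : Obj C) (v0 : CHom V0 U0) (a : CHom U0 X) (w0 : CHom X (sh V0))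
  (hV0 : V V0) (hU0 : U U0) (hdist1 : dist D (Tri v0 a w0))
  (T1 S1 : Obj C) (e : CHom T1 S1) (b : CHom S1 U0) (q : CHom U0 (sh T1))
  (hT1 : T (sh T1)) (hS1 : S (sh S1)) (hdist2 : dist D (Tri e b q))
  (Z : Obj C) (z : CHom X Z) (r : CHom Z (sh S1))
  (hdist3 : dist D (Tri (mcomp a b) z r)) :
  forall Y : Obj C, Cplus D T U V Y ->
    (forall f g : CHom Z Y,
        eqW (Wcore T U) (mcomp f z) (mcomp g z) -> eqW (Wcore T U) f g) /\
    (forall h : CHom X Y, exists f : CHom Z Y, eqW (Wcore T U) (mcomp f z) h).
Proof.
move=> Y Y_Cplus; case: htwin => [[ST _] [UV _] SV]; split.
- move=> f g; rewrite /eqW -mcompBl.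
  exact: (factors_through_cancel_cone ST hS1 Y_Cplus hT hU SV hdist3).
- move=> h.
  have [f ->] := hom_extends_along_cone ST hS1 Y_Cplus h UV hU0 hdist3.
  by exists f; rewrite /eqW subrr; apply/factors_through0/subcat_Wcore.
Qed.
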